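(* Let $A=[1-\alpha^*,\alpha^*]$ with $\frac12<\alpha^*<1$, $J=[1,2]$, and for $B\subseteq\mathbb R$ let $B_{\mathbb Q}=B\cap\mathbb Q$. Let $W=\{W(t,\alpha):t\ge0,\alpha\in A\}$ be $H$-scalable, and assume that for some $q>0$, $\mathbb E\sup_{u\in J_{\mathbb Q},\alpha\in A_{\mathbb Q}}|W(u,\alpha)|^q<\infty$. Then for every rational $\delta>0$, $$\mathbb E\Big(\sup_{u\in(0,\delta]_{\mathbb Q},\alpha\in A_{\mathbb Q}}|W(u,\alpha)|^q\Big)\le\frac{\delta^{Hq}}{1-2^{-Hq}}\,\mathbb E\Big(\sup_{u\in J_{\mathbb Q},\alpha\in A_{\mathbb Q}}|W(u,\alpha)|^q\Big).$$
   Context: A process $\{W(t,\alpha):t\ge0,\alpha\in A\}$ is $H$-scalable (in $t$) if $W(0,\alpha)=0$ for all $\alpha\in A$ and, for some $H\in(0,\infty)$ and all $c\in(0,\infty)$, the processes $\{W(ct,\alpha):t\ge0,\alpha\in A\}$ and $\{c^HW(t,\alpha):t\ge0,\alpha\in A\}$ have the same finite-dimensional distributions. *)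

From HB Require Import structures.
From mathcomp Require Import all_boot all_order all_algebra.
From mathcomp Require Import all_classical all_reals all_analysis.
Set Implicit Arguments. Unset Strict Implicit. Unset Printing Implicit Defensive.
Import Order.TTheory GRing.Theory Num.Theory.
Import numFieldNormedType.Exports.
Local Open Scope classical_set_scope.
Local Open Scope ring_scope.

Definition is_rat {R : realType} (x : R) : Prop := exists r : rat, x = ratr r.

Definition ratpart {R : realType} (B : set R) : set R := [set x | B x /\ is_rat x].

Definition supW {d} {T : measurableType d} {R : realType}
  (W : R -> R -> T -> R) (U Al : set R) (q : R) (w : T) : \bar R :=
  ereal_sup [set ((`|W u a w| `^ q)%:E) | u in U & a in Al].


(* H-scalability: W(0,a) = 0 (a.s.) for all a in A, and for every c > 0 the
   finite-dimensional distributions of {W(ct,a)} and {c^H W(t,a)} coincide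
   (equality of the joint laws on all measurable rectangles, which generate
   the product sigma-algebra). *)
Definition H_scalable {d} {T : measurableType d} {R : realType}
  (P : probability T R) (W : R -> R -> T -> R) (A : set R) (H : R) : Prop :=
  (forall a, A a -> P [set w | W 0 a w != 0] = 0%E) /\
  (0 < H) /\
  (forall c : R, 0 < c -> forall (n : nat) (ts al : 'I_n -> R) (B : 'I_n -> set R),
     (forall i, 0 <= ts i /\ A (al i)) -> (forall i, measurable (B i)) ->
     P (\bigcap_(i in setT) [set w | B i (W (c * ts i) (al i) w)]) =
     P (\bigcap_(i in setT) [set w | B i (c `^ H * W (ts i) (al i) w)])).

From HB Require Import structures.
From mathcomp Require Import all_boot all_order all_algebra.
From mathcomp Require Import all_classical all_reals all_analysis.
From mathcomp Require Import measurable_realfun lra.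

Set Implicit Arguments. Unset Strict Implicit. Unset Printing Implicit Defensive.
Import Order.TTheory GRing.Theory Num.Theory.
Import numFieldNormedType.Exports.
Local Open Scope classical_set_scope.
Local Open Scope ring_scope.

(* Put c_k = delta / 2^(k+1).  Every rational u in (0, delta] lies in a block
   c_k (1, 2], so the supremum over (0, delta] is at most the sum over k of the
   suprema of |W(c_k u, a)|^q over u in (1, 2].  By H-scalability each of these
   has the law of c_k^(Hq) times the supremum of |W(u, a)|^q: the event
   {sup <= x} over countably many rational indices is the decreasing limit of
   events involving finitely many of them, whose probabilities are fixed by the
   finite-dimensional distributions, and the expectation of a nonnegative
   variable is determined by its distribution function.  Summing the geometric
   series sum_k c_k^(Hq) <= delta^(Hq) / (1 - 2^(-Hq)) gives the bound. *)

Section rational_arithmetic.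
Context {R : realType}.

Lemma is_rat_nat n : is_rat (n%:R : R).
Proof. by exists n%:R; rewrite rmorph_nat. Qed.

Lemma is_ratM (x y : R) : is_rat x -> is_rat y -> is_rat (x * y).
Proof. by move=> [r ->] [s ->]; exists (r * s); rewrite rmorphM. Qed.

Lemma is_ratV (x : R) : is_rat x -> is_rat x^-1.
Proof. by move=> [r ->]; exists r^-1; rewrite fmorphV. Qed.

Lemma is_rat_dyadic (x : R) k : is_rat x -> is_rat (x / 2 ^+ k).
Proof. by move=> xQ; rewrite -natrX; apply/is_ratM/is_ratV/is_rat_nat. Qed.

End rational_arithmetic.

Section rational_enumeration.
Context {R : realType}.
Local Open Scope ereal_scope.

Definition ratpair (n : nat) : R * R :=
  if unpickle n is Some (r, s) then (ratr r, ratr s) else (0%R, 0%R).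

Lemma ratpair_surj (x y : R) : is_rat x -> is_rat y -> exists n, ratpair n = (x, y).
Proof. by move=> [r ->] [s ->]; exists (pickle (r, s)); rewrite /ratpair pickleK. Qed.

Definition ratpair_in (U Al : set R) (n : nat) : bool :=
  `[< U (ratpair n).1 /\ Al (ratpair n).2 >].

Definition ratpair_seq (U Al : set R) (h : R -> R -> \bar R) (n : nat) : \bar R :=
  if ratpair_in U Al n then h (ratpair n).1 (ratpair n).2 else -oo.

Lemma ereal_sup_ratpair_seq (U Al : set R) (h : R -> R -> \bar R) :
  (forall u, U u -> is_rat u) -> (forall a, Al a -> is_rat a) ->
  ereal_sup [set h u a | u in U & a in Al] = ereal_sup (range (ratpair_seq U Al h)).
Proof.
move=> Urat Alrat; apply/eqP; rewrite eq_le; apply/andP; split.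
  apply/ereal_supP => _ [u Uu [a Ala <-]].
  have [n un] := ratpair_surj (Urat _ Uu) (Alrat _ Ala).
  apply: ereal_sup_ubound; exists n => //.
  by rewrite /ratpair_seq /ratpair_in un /=; case: asboolP => // -[].
apply/ereal_supP => _ [n _ <-]; rewrite /ratpair_seq /ratpair_in.
case: asboolP => [[Un Aln]|_]; last exact: leNye.
by apply: ereal_sup_ubound; exists (ratpair n).1 => //; exists (ratpair n).2.
Qed.

End rational_enumeration.

Section sup_over_rationals.
Context d (T : measurableType d) (R : realType) (q : R) (U Al : set R).
Local Open Scope ereal_scope.

Lemma measurable_powR_norm (f : T -> R) : measurable_fun setT f ->
  measurable_fun setT (fun w => (`|f w| `^ q)%:E).
Proof.
move=> mf; apply/measurable_EFinP.
exact: measurableT_comp (measurable_powR q)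
  (measurableT_comp (@normr_measurable R setT) mf).
Qed.

Lemma supW_ge0 (G : R -> R -> T -> R) u a w : U u -> Al a -> 0 <= supW G U Al q w.
Proof.
move=> Uu Ala; apply: le_trans (ereal_sup_ubound _); last by exists u => //; exists a.
by rewrite lee_fin powR_ge0.
Qed.

Lemma supW_scale_le (G : R -> R -> T -> R) (k : R) (U' : set R) w :
  (0 <= k)%R -> U `<=` U' ->
  supW (fun u a v => k * G u a v)%R U Al q w <= (k `^ q)%:E * supW G U' Al q w.
Proof.
move=> k0 UU'; apply/ereal_supP => _ [u Uu [a Ala <-]].
rewrite normrM ger0_norm // powRM // EFinM lee_wpmul2l ?lee_fin ?powR_ge0 //.
by apply: ereal_sup_ubound; exists u; [exact: UU' | exists a].
Qed.

Definition powR_norm_seq (G : R -> R -> T -> R) (w : T) :=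
  ratpair_seq U Al (fun u a => (`|G u a w| `^ q)%:E).

Lemma measurable_powR_norm_seq (G : R -> R -> T -> R) n :
  (forall u a, measurable_fun setT (G u a)) ->
  measurable_fun setT (powR_norm_seq G ^~ n).
Proof.
move=> mG; rewrite /powR_norm_seq /ratpair_seq.
by case: ratpair_in; [exact: measurable_powR_norm | exact: measurable_cst].
Qed.

Hypotheses (Urat : forall u, U u -> is_rat u) (Alrat : forall a, Al a -> is_rat a).

Lemma measurable_supW (G : R -> R -> T -> R) :
  (forall u a, measurable_fun setT (G u a)) -> measurable_fun setT (supW G U Al q).
Proof.
move=> mG; have -> : supW G U Al q = fun w => esups (powR_norm_seq G w) 0%N.
  apply/funext => w; rewrite /supW ereal_sup_ratpair_seq //=.
  by congr ereal_sup; apply/seteqP; split => _ [n _ <-]; exists n.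
exact: (measurable_fun_esups (f := fun n w => powR_norm_seq G w n)
  (fun n => measurable_powR_norm_seq n mG)).
Qed.

Lemma supW_le_bigcap (G : R -> R -> T -> R) (x : \bar R) :
  [set w | supW G U Al q w <= x] = \bigcap_n [set w | powR_norm_seq G w n <= x].
Proof.
apply/seteqP; split => w /=; rewrite /supW ereal_sup_ratpair_seq //.
  by move/ereal_supP => Gx n _; apply: Gx; exists n.
by move=> Gx; apply/ereal_supP => _ [n _ <-]; exact: Gx.
Qed.

End sup_over_rationals.

Section probability_limits.
Context d (T : measurableType d) (R : realType) (P : probability T R).

Lemma eq_prob_bigcup (A B : (set T)^nat) :
  (forall n, measurable (A n)) -> (forall n, measurable (B n)) ->
  nondecreasing_seq A -> nondecreasing_seq B ->
  (forall n, P (A n) = P (B n)) -> P (\bigcup_n A n) = P (\bigcup_n B n).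
Proof.
move=> mA mB ndA ndB AB.
have CA := nondecreasing_cvg_mu (mu := P) mA (bigcup_measurable (fun n _ => mA n)) ndA.
have CB := nondecreasing_cvg_mu (mu := P) mB (bigcup_measurable (fun n _ => mB n)) ndB.
have BA : P \o B = P \o A by apply/funext => n /=; rewrite AB.
by rewrite BA in CB; exact: cvg_unique _ CA CB.
Qed.

Lemma eq_prob_bigcap (A B : (set T)^nat) :
  (forall n, measurable (A n)) -> (forall n, measurable (B n)) ->
  (forall n, P (\bigcap_(i < n) A i) = P (\bigcap_(i < n) B i)) ->
  P (\bigcap_n A n) = P (\bigcap_n B n).
Proof.
have bigcap_finite (C : (set T)^nat) : \bigcap_n C n = \bigcap_n \bigcap_(i < n) C i.
  apply/seteqP; split => w /= Cw n; first by move=> _ i _; exact: Cw.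
  by move=> _; apply: (Cw n.+1) => /=.
have finite_nonincreasing (C : (set T)^nat) :
    nonincreasing_seq (fun n => \bigcap_(i < n) C i).
  move=> m n mn; apply/subsetPset => w Cw i /= im; apply: Cw => /=.
  exact: leq_trans im mn.
have mfinite (C : (set T)^nat) n : (forall n, measurable (C n)) ->
    measurable (\bigcap_(i < n) C i).
  by move=> mC; apply: bigcap_measurableType => i _; exact: mC.
have finite_lt_oo (C : (set T)^nat) n : (forall n, measurable (C n)) ->
    (P (\bigcap_(i < n) C i) < +oo)%E.
  by move=> mC; apply: le_lt_trans (probability_le1 P (mfinite C n mC)) (ltry _).
move=> mA mB AB; rewrite (bigcap_finite A) (bigcap_finite B).
have CA := nonincreasing_cvg_mu (finite_lt_oo A 0%N mA) (fun n => mfinite A n mA)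
  (bigcapT_measurable (fun n => mfinite A n mA)) (finite_nonincreasing A).
have CB := nonincreasing_cvg_mu (finite_lt_oo B 0%N mB) (fun n => mfinite B n mB)
  (bigcapT_measurable (fun n => mfinite B n mB)) (finite_nonincreasing B).
have BA : P \o (fun n => \bigcap_(i < n) B i) = P \o (fun n => \bigcap_(i < n) A i).
  by apply/funext => n /=; rewrite AB.
by rewrite BA in CB; exact: cvg_unique _ CA CB.
Qed.

End probability_limits.

Section equal_distribution_functions.
Context d (T : measurableType d) (R : realType) (P : probability T R).
Local Open Scope ereal_scope.

Let measurable_le (h : T -> \bar R) x : measurable_fun setT h ->
  measurable [set w | h w <= x].
Proof. by move=> mh; rewrite -(setTI [set w | _]); exact: emeasurable_fun_infty_c. Qed.

Let measurable_ge (h : T -> \bar R) x : measurable_fun setT h ->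
  measurable [set w | x <= h w].
Proof. by move=> mh; rewrite -(setTI [set w | _]); exact: emeasurable_fun_c_infty. Qed.

Let measurable_lt (h : T -> \bar R) x : measurable_fun setT h ->
  measurable [set w | h w < x].
Proof. by move=> mh; rewrite -(setTI [set w | _]); exact: emeasurable_fun_infty_o. Qed.

Lemma lt_bigcup_le (h : T -> \bar R) (a : R) :
  [set w | h w < a%:E] = \bigcup_m [set w | h w <= (a - m.+1%:R^-1)%:E].
Proof.
apply/seteqP; split => w /=.
  move=> hwa; suff [m hm] : exists m, h w <= (a - m.+1%:R^-1)%:E by exists m.
  move: hwa; case: (h w) => [r| |] //= ra; last by exists 0%N; exact: leNye.
  have [k hk] := ltr_add_invr ra.
  by exists k; rewrite lee_fin ltW // ltrBrDr.
move=> [m _ /= hm]; apply: le_lt_trans hm _.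
by rewrite lte_fin gtrBl invr_gt0 ltr0n.
Qed.

Lemma integral_approx (h : T -> \bar R) n : measurable_fun setT h ->
  \int[P]_w (approx setT h n w)%:E =
  \sum_(k < n * 2 ^ n) ((k%:R * 2 ^- n)%:E * P (dyadic_approx setT h n k)) +
  n%:R%:E * P (integer_approx setT h n).
Proof.
move=> mh; rewrite /approx.
under eq_integral do rewrite EFinD -sumEFin.
have mA k : measurable (dyadic_approx setT h n k).
  rewrite /dyadic_approx; case: ifPn => [kn|_]//; rewrite -preimage_comp.
  by apply: mh => //; apply/measurable_image_EFin; exact: measurable_itv.
have mB : measurable (integer_approx setT h n).
  by rewrite /integer_approx setTI; exact: measurable_ge.
rewrite ge0_integralD //; last 3 first.
- by move=> x _; apply: sume_ge0 => k _; rewrite lee_fin mulr_ge0.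
- apply: emeasurable_sum => k; apply/measurable_EFinP.
  by apply: measurable_funM => //; exact: measurable_indic.
- apply/measurable_EFinP.
  by apply: measurable_funM => //; exact: measurable_indic.
congr (_ + _).
  rewrite ge0_integral_sum //; last first.
    move=> k; apply/measurable_EFinP.
    by apply: measurable_funM => //; exact: measurable_indic.
  apply: eq_bigr => k _; under eq_integral do rewrite EFinM.
  rewrite ge0_integralZl_EFin ?integral_indic ?setIT //.
  by apply/measurable_EFinP; exact: measurable_indic.
under eq_integral do rewrite EFinM.
rewrite ge0_integralZl_EFin ?integral_indic ?setIT //.
by apply/measurable_EFinP; exact: measurable_indic.
Qed.

Variables (f g : T -> \bar R).
Hypotheses (mf : measurable_fun setT f) (mg : measurable_fun setT g).
Hypotheses (f0 : forall w, 0 <= f w) (g0 : forall w, 0 <= g w).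
Hypothesis eq_cdf : forall a : R, P [set w | f w <= a%:E] = P [set w | g w <= a%:E].

Lemma eq_prob_lt (a : R) : P [set w | f w < a%:E] = P [set w | g w < a%:E].
Proof.
have nd (h : T -> \bar R) :
    nondecreasing_seq (fun m => [set w | h w <= (a - m.+1%:R^-1)%:E]).
  move=> m n mn; apply/subsetPset => w /= hw; apply: le_trans hw _.
  by rewrite lee_fin lerB // lef_pV2 ?posrE ?ltr0n // ler_nat ltnS.
rewrite !lt_bigcup_le; apply: (eq_prob_bigcup _ _ (nd f) (nd g)) => m //.
  exact: measurable_le.
exact: measurable_le.
Qed.

Lemma eq_prob_ge (a : R) : P [set w | a%:E <= f w] = P [set w | a%:E <= g w].
Proof.
have geC (h : T -> \bar R) : [set w | a%:E <= h w] = ~` [set w | h w < a%:E].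
  by apply/seteqP; split => w /=; rewrite leNgt => /negP.
by rewrite !geC !probability_setC ?eq_prob_lt //; apply: measurable_lt.
Qed.

Lemma eq_prob_itv (a b : R) : (a <= b)%R ->
  P [set w | f w \in EFin @` [set` Interval (BLeft a) (BLeft b)]] =
  P [set w | g w \in EFin @` [set` Interval (BLeft a) (BLeft b)]].
Proof.
have itvE (h : T -> \bar R) :
    [set w | h w \in EFin @` [set` Interval (BLeft a) (BLeft b)]] =
    [set w | a%:E <= h w] `\` [set w | b%:E <= h w].
  apply/seteqP; split => w /=.
    rewrite in_setE => -[r]; rewrite /= in_itv /= => /andP[ar rb] <-.
    by split; rewrite /= lee_fin //; apply/negP; rewrite -ltNge.
  move=> [ah /negP]; rewrite -ltNge in_setE; move: ah.
  case: (h w) => [r| |] //=; rewrite ?lee_fin ?lte_fin => ar rb.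
  by exists r => //; rewrite /= in_itv /= ar rb.
have finite (h : T -> \bar R) x : measurable_fun setT h ->
    P [set w | x%:E <= h w] < +oo.
  by move=> mh; apply: le_lt_trans (probability_le1 P (measurable_ge _ mh)) (ltry _).
have mf_ge x : measurable [set w | x <= f w] by exact: measurable_ge.
have mg_ge x : measurable [set w | x <= g w] by exact: measurable_ge.
move=> ab; rewrite !itvE !measureD ?finite //.
rewrite !setIidr; last 2 first.
- by move=> w /= bw; apply: le_trans bw; rewrite lee_fin.
- by move=> w /= bw; apply: le_trans bw; rewrite lee_fin.
by congr (_ - _); apply: eq_prob_ge.
Qed.

(* The integrals are limits of integrals of dyadic approximations, which only
   involve the probabilities of [a <= f] and [a <= f < b]. *)
Lemma eq_integral_cdf : \int[P]_w f w = \int[P]_w g w.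
Proof.
rewrite (nd_ge0_integral_lim P (g := nnsfun_approx measurableT mf)) //; last 2 first.
- by move=> w m n mn; exact/lefP/(nd_nnsfun_approx measurableT mf mn).
- by move=> w; exact: (cvg_nnsfun_approx measurableT mf (fun w _ => f0 w)).
rewrite (nd_ge0_integral_lim P (g := nnsfun_approx measurableT mg)) //; last 2 first.
- by move=> w m n mn; exact/lefP/(nd_nnsfun_approx measurableT mg mn).
- by move=> w; exact: (cvg_nnsfun_approx measurableT mg (fun w _ => g0 w)).
congr (limn _); apply/funext => n /=.
rewrite -!integralT_nnsfun !nnsfun_approxE !integral_approx //.
congr (_ + _).
  apply: eq_bigr => k _; congr (_ * _).
  rewrite /dyadic_approx; case: ifPn => // _.
  rewrite !setTI /dyadic_itv eq_prob_itv //.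
  by rewrite ler_wpM2r ?invr_ge0 ?exprn_ge0 ?ler_nat.
by rewrite /integer_approx !setTI; congr (_ * _); apply: eq_prob_ge.
Qed.

End equal_distribution_functions.

Section scaling.
Context d (T : measurableType d) (R : realType) (P : probability T R).
Variables (W : R -> R -> T -> R) (A : set R) (H q : R) (U Al : set R) (u0 a0 : R).
Hypotheses (mW : forall t a, measurable_fun setT (W t a)) (scW : H_scalable P W A H).
Hypotheses (Urat : forall u, U u -> is_rat u) (Alrat : forall a, Al a -> is_rat a).
Hypotheses (U_ge0 : forall u, U u -> 0 <= u) (AlA : Al `<=` A).
Hypotheses (Uu0 : U u0) (Ala0 : Al a0).
Local Open Scope ereal_scope.

Let measurable_scale (c : R) u a : measurable_fun setT (fun w => c `^ H * W u a w)%R.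
Proof. by apply: measurable_funM => //; exact: measurable_cst. Qed.

Lemma prob_supW_scale (c x : R) : (0 < c)%R ->
  P [set w | supW (fun u a => W (c * u)%R a) U Al q w <= x%:E] =
  P [set w | supW (fun u a w => c `^ H * W u a w)%R U Al q w <= x%:E].
Proof.
have mseq (G : R -> R -> T -> R) i : (forall u a, measurable_fun setT (G u a)) ->
    measurable [set w | powR_norm_seq q U Al G w i <= x%:E].
  move=> mG; rewrite -(setTI [set w | _]).
  by apply: emeasurable_fun_infty_c => //; exact: measurable_powR_norm_seq.
move=> c0; rewrite !supW_le_bigcap //.
apply: eq_prob_bigcap => [i|i|n]; [exact: mseq|exact: mseq|].
(* indices outside [U `*` Al] are padded with the point (0, a0) and the trivial
   constraint [setT] *)
pose ts (i : 'I_n) : R := if ratpair_in U Al i then (ratpair i).1 else 0%R.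
pose al (i : 'I_n) : R := if ratpair_in U Al i then (ratpair i).2 else a0.
pose B (i : 'I_n) := if ratpair_in U Al i then [set y : R | (`|y| `^ q)%:E <= x%:E]
                     else setT.
have finE (G : R -> R -> T -> R) :
    \bigcap_(i < n) [set w | powR_norm_seq q U Al G w i <= x%:E] =
    \bigcap_(i in setT) [set w | B i (G (ts i) (al i) w)].
  rewrite /powR_norm_seq /ratpair_seq /B /ts /al.
  apply/seteqP; split => w /= Gw i.
    by move=> _; have := Gw i (ltn_ord i); case: (ratpair_in U Al i).
  move=> lt_in; have := Gw (Ordinal lt_in) I => /=.
  by case: (ratpair_in U Al i) => // _; exact: leNye.
have [_ [_ fdd]] := scW; rewrite !finE; apply: fdd => // i.
  rewrite /ts /al /ratpair_in; case: asboolP => [[Ui Ali]|_]; split => //.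
  - exact: U_ge0.
  - exact: AlA.
  - exact: AlA.
rewrite /B; case: ratpair_in => //; rewrite -(setTI [set y | _]).
apply: emeasurable_fun_infty_c => //; apply/measurable_EFinP.
exact: measurableT_comp (measurable_powR q) (@normr_measurable R setT).
Qed.

Lemma integral_supW_scale (c : R) : (0 < c)%R ->
  \int[P]_w supW (fun u a => W (c * u)%R a) U Al q w =
  \int[P]_w supW (fun u a w => c `^ H * W u a w)%R U Al q w.
Proof.
move=> c0; apply: eq_integral_cdf.
- by apply: measurable_supW => // u a; exact: mW.
- exact: measurable_supW.
- by move=> w; exact: supW_ge0 Uu0 Ala0.
- by move=> w; exact: supW_ge0 Uu0 Ala0.
- by move=> x; exact: prob_supW_scale.
Qed.

Lemma integral_supW_scale_le (c : R) (J : set R) :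
  (0 < c)%R -> U `<=` J -> (forall u, J u -> is_rat u) ->
  \int[P]_w supW (fun u a => W (c * u)%R a) U Al q w <=
  (c `^ (H * q))%:E * \int[P]_w supW W J Al q w.
Proof.
move=> c0 UJ Jrat; rewrite integral_supW_scale //.
rewrite -ge0_integralZl_EFin ?powR_ge0 //; last 2 first.
- by move=> w _; exact: supW_ge0 (UJ _ Uu0) Ala0.
- exact: measurable_supW.
apply: ge0_le_integral => //.
- by move=> w _; exact: supW_ge0 Uu0 Ala0.
- exact: measurable_supW.
- by apply: measurable_funeM; exact: measurable_supW.
by move=> w _; rewrite powRrM; apply: supW_scale_le => //; exact: powR_ge0.
Qed.

End scaling.

Section dyadic_blocks.
Context {R : realType}.

Lemma exists_dyadic_block (delta u : R) : 0 < delta -> 0 < u -> u <= delta ->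
  exists k, delta / 2 ^+ k.+1 < u /\ u <= delta / 2 ^+ k.
Proof.
move=> delta0 u0 u_le.
have ex_lt : exists k, delta / 2 ^+ k.+1 < u.
  exists (Num.truncn (delta / u)).
  rewrite ltr_pdivrMr ?exprn_gt0 // mulrC -ltr_pdivrMr //.
  apply: lt_le_trans (truncnS_gt _) _.
  by rewrite -natrX ler_nat ltnW // ltn_expl.
have [[|k] lt_k min_k] := ex_minnP ex_lt; first by exists 0%N; rewrite expr0 divr1.
by exists k.+1; split => //; rewrite leNgt; apply/negP => /min_k; rewrite ltnn.
Qed.

Lemma powR_dyadic (delta p : R) k : 0 <= delta ->
  (delta / 2 ^+ k.+1) `^ p = delta `^ p * (2 `^ (- p)) ^+ k.+1.
Proof.
move=> delta0; rewrite powRM ?invr_ge0 ?exprn_ge0 //; congr (_ * _).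
rewrite -(@powR_invn _ 2) // -powRrM -powR_mulrn ?powR_ge0 // -powRrM.
by congr (_ `^ _); rewrite !mulNr mulrC.
Qed.

Lemma nneseries_dyadic_powR_le (delta p : R) : 0 <= delta -> 0 < p ->
  (\sum_(0 <= k <oo) ((delta / 2 ^+ k.+1) `^ p)%:E <=
   (delta `^ p / (1 - 2 `^ (- p)))%:E)%E.
Proof.
move=> delta0 p0; set r := 2 `^ (- p).
have r0 : 0 < r by rewrite powR_gt0.
have r1 : r < 1.
  rewrite /r powRN invf_lt1 ?powR_gt0 //.
  have := gt0_ltr_powR p0 (x := 1) (y := 2).
  by rewrite powR1 => -> //; rewrite ?nnegrE ?ler0n ?ltr1n.
have termE k : (delta / 2 ^+ k.+1) `^ p = geometric (delta `^ p * r) r k.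
  by rewrite powR_dyadic // exprS mulrA.
apply: lime_le.
  by apply: is_cvg_nneseries => k _ _; rewrite lee_fin powR_ge0.
apply: nearW => N; rewrite sumEFin lee_fin.
under eq_bigr do rewrite termE.
apply: le_trans (geometric_le_lim N _ r0 _) _.
- by rewrite mulr_ge0 ?powR_ge0 ?ltW.
- by rewrite ger0_norm ?ltW.
apply: ler_wpM2r; first by rewrite invr_ge0 subr_ge0 ltW.
exact: ler_piMr (powR_ge0 _ _) (ltW r1).
Qed.

End dyadic_blocks.

Section dyadic_cover.
Context d (T : measurableType d) (R : realType) (P : probability T R).
Variables (W : R -> R -> T -> R) (A : set R) (H q : R) (Al : set R) (a0 : R).
Hypothesis Ala0 : Al a0.
Local Open Scope ereal_scope.

Let two_in_block : ratpart `]1%R, 2%R] (2%:R : R).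
Proof. by split; [rewrite /= in_itv /= ltr1n lexx | exact: is_rat_nat]. Qed.

Lemma supW_le_dyadic_series (delta : R) w : is_rat delta -> (0 < delta)%R ->
  supW W (ratpart `]0%R, delta]) Al q w <=
  \sum_(0 <= k <oo) supW (fun u a => W (delta / 2 ^+ k.+1 * u)%R a)
                         (ratpart `]1%R, 2%R]) Al q w.
Proof.
move=> delta_rat delta0; apply/ereal_supP => _ [u [+ u_rat] [a Ala <-]].
rewrite /= in_itv /= => /andP[u0 u_le].
have [k [lt_k le_k]] := exists_dyadic_block delta0 u0 u_le.
have c0 : (0 < delta / 2 ^+ k.+1)%R by rewrite divr_gt0 // exprn_gt0.
have F0 n : 0 <= supW (fun u a => W (delta / 2 ^+ n.+1 * u)%R a)
                      (ratpart `]1%R, 2%R]) Al q w.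
  exact: supW_ge0 two_in_block Ala0.
apply: le_trans (nneseries_lim_ge k.+1 (fun n _ _ => F0 n)).
rewrite big_nat_recr //= lee_paddl //; first by apply: sume_ge0 => n _.
apply: ereal_sup_ubound; exists (u / (delta / 2 ^+ k.+1))%R; last first.
  by exists a => //; rewrite mulrC divfK // gt_eqF.
split; last by apply/is_ratM/is_ratV/is_rat_dyadic.
rewrite /= in_itv /= ltr_pdivlMr // mul1r lt_k /= ler_pdivrMr //.
by apply: le_trans le_k _; rewrite exprS invfM mulrCA mulVKf ?pnatr_eq0.
Qed.

Hypotheses (mW : forall t a, measurable_fun setT (W t a)) (scW : H_scalable P W A H).
Hypotheses (Alrat : forall a, Al a -> is_rat a) (AlA : Al `<=` A).

Lemma integral_supW_le_dyadic_series (delta : R) : is_rat delta -> (0 < delta)%R ->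
  \int[P]_w supW W (ratpart `]0%R, delta]) Al q w <=
  \sum_(0 <= k <oo) ((delta / 2 ^+ k.+1) `^ (H * q))%:E *
                     \int[P]_w supW W (ratpart `[1%R, 2%R]) Al q w.
Proof.
move=> delta_rat delta0; set U : set R := ratpart `]1%R, 2%R].
pose F k := supW (fun u a => W (delta / 2 ^+ k.+1 * u)%R a) U Al q.
have Urat u : U u -> is_rat u by case.
have UJ : U `<=` ratpart `[1%R, 2%R].
  move=> u [+ u_rat]; rewrite /= !in_itv /= => /andP[lt1 le2].
  by split; rewrite //= in_itv /= le2 ltW.
have U_ge0 u : U u -> (0 <= u)%R.
  by case; rewrite /= in_itv /= => /andP[/ltW/(le_trans ler01)].
have mF k : measurable_fun setT (F k) by exact: measurable_supW.
have F0 k w : 0 <= F k w by exact: supW_ge0 two_in_block Ala0.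
have delta_in : ratpart `]0%R, delta] delta by split; rewrite //= in_itv /= delta0 lexx.
apply: le_trans (_ : _ <= \int[P]_w \sum_(0 <= k <oo) F k w) _.
  apply: ge0_le_integral => //.
  - by move=> w _; exact: supW_ge0 delta_in Ala0.
  - by apply: measurable_supW => // u [].
  - exact: (ge0_emeasurable_sum (P := xpredT) (fun k w _ _ => F0 k w)
      (fun k _ => mF k)).
  - by move=> w _; exact: supW_le_dyadic_series.
rewrite (integral_nneseries P measurableT (fun k => mF k) (fun k w _ => F0 k w)).
apply: lee_nneseries => [k _ _|k _]; first by apply: integral_ge0 => w _.
apply: (integral_supW_scale_le q mW scW Urat Alrat U_ge0 AlA two_in_block Ala0 _ UJ).
- by rewrite divr_gt0 // exprn_gt0.
- by move=> u [].
Qed.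

End dyadic_cover.

Unset Implicit Arguments. Set Strict Implicit.

Theorem lemma1 (R : realType) (d : measure_display) (T : measurableType d)
  (P : probability T R) (astar H q delta : R) (W : R -> R -> T -> R) :
  1 / 2 < astar -> astar < 1 ->
  (forall t a, measurable_fun setT (W t a)) ->
  H_scalable P W `[1 - astar, astar] H ->
  0 < q ->
  (\int[P]_w supW W (ratpart `[1%R, 2%R]) (ratpart `[(1 - astar)%R, astar]) q w < +oo)%E ->
  is_rat delta -> 0 < delta ->
  (\int[P]_w supW W (ratpart `]0%R, delta]) (ratpart `[(1 - astar)%R, astar]) q w <=
   ((delta `^ (H * q)) / (1 - 2 `^ (- (H * q))))%:E *
   \int[P]_w supW W (ratpart `[1%R, 2%R]) (ratpart `[(1 - astar)%R, astar]) q w)%E.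
Proof.
move=> astar_gt astar_lt1 mW scW q0 X_fin delta_rat delta0.
have H0 : 0 < H by case: scW => _ [].
set Al := ratpart `[(1 - astar)%R, astar] in X_fin *.
set X := (\int[P]_w supW W (ratpart `[1%R, 2%R]) Al q w)%E in X_fin *.
have Al_half : Al 2^-1.
  by split; [rewrite /= in_itv /=; apply/andP; split; lra | exact/is_ratV/is_rat_nat].
have one_in : ratpart `[1%R, 2%R] (1 : R).
  by split; [rewrite /= in_itv /= lexx ler1n | exact: (is_rat_nat 1)].
have X0 : (0 <= X)%E by apply: integral_ge0 => w _; exact: supW_ge0 one_in Al_half.
have Alrat a : Al a -> is_rat a by case.
have AlA : Al `<=` `[1 - astar, astar] by move=> a [].
apply: le_trans (integral_supW_le_dyadic_series q Al_half mW scW Alrat AlA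
  delta_rat delta0) _; rewrite -/X.
have -> : X = (fine X)%:E by rewrite fineK // ge0_fin_numE.
under eq_eseriesr => k _ do rewrite muleC.
rewrite nneseriesZl => [|k _]; last by rewrite lee_fin powR_ge0.
rewrite muleC lee_wpmul2r ?lee_fin ?fine_ge0 //.
exact: nneseries_dyadic_powR_le (ltW delta0) (mulr_gt0 H0 q0).
Qed.
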